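(* Let $A$ be a non-trivial finite group and $m$ an odd positive integer with $\gcd(|A|,m)=1$. Let $B$ be a maximal subgroup of $A$ with $\psi(B)\ge\psi(B')$ for every maximal subgroup $B'$ of $A$. (i) If $\psi(A)/\psi(B)\le 7$, then $B\times\mathcal{C}_m$ is a maximal subgroup of $A\times\mathcal{C}_m$ attaining the maximum value of $\psi$ among the maximal subgroups (equivalently, among all proper subgroups) of $A\times\mathcal{C}_m$. (ii) If $B$ is cyclic and $|A:B|=2$, then $\psi(A)/\psi(B)\le7$, so the conclusion of (i) holds.
   Context: $\psi(G)=\sum_{x\in G}o(x)$ for a finite group $G$; $\mathcal{C}_n$ is the cyclic group of order $n$. *)

From mathcomp Require Import all_boot all_fingroup all_solvable.
Set Implicit Arguments. Unset Strict Implicit. Unset Printing Implicit Defensive.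

Definition psi (gT : finGroupType) (G : {set gT}) : nat := \sum_(x in G) #[x]%g.

From mathcomp Require Import all_boot all_fingroup all_solvable zify.
Set Implicit Arguments. Unset Strict Implicit. Unset Printing Implicit Defensive.

(* If M < A x C_m, coprimality splits M = M1 x M2 with M1 <= A and M2 <= C_m,
   and psi is multiplicative on such products.  When M1 < A it lies in a
   maximal subgroup of A, so psi M <= psi B * psi C_m.  Otherwise M2 < C_m, and
   an odd cyclic group has psi C >= 7 psi K for every K < C: for an odd prime p
   dividing |C : K| and u generating the p-part of C, the cosets K, Ku, Ku^-1
   are disjoint and right multiplication by u^(+-1) multiplies the order of
   every element of K by at least p >= 3.
   For (ii), write A \ B = Bx with x a 2-element.  Since (wx)^2 lies in the
   abelian normal subgroup B, |wx| <= 2 |B|_2 |w_2'|, and |B|_2 |w_2'| is at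
   most |w| + |wg| for g of order |B|_2; summing over w in B gives
   psi A <= 5 psi B. *)

Section Psi.
Variable gT : finGroupType.
Implicit Types (x y : gT) (X Y : {set gT}).

Lemma psiS X Y : X \subset Y -> psi X <= psi Y.
Proof.
move=> sXY; rewrite [psi Y](big_setID X) /= (setIidPr sXY); exact: leq_addr.
Qed.

Lemma psiU X Y : [disjoint X & Y] -> psi (X :|: Y) = psi X + psi Y.
Proof. by move=> dXY; rewrite /psi -bigU //; apply: eq_bigl => x; rewrite !inE. Qed.

Lemma psi_rcoset X v : psi (X :* v)%g = \sum_(k in X) #[k * v]%g.
Proof.
by rewrite /psi (reindex_inj (mulIg v)); apply: eq_bigl => k; rewrite /= mem_rcoset mulgK.
Qed.

Lemma disjoint_rcosets (H : {group gT}) x y :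
  (x * y^-1 \notin H)%g -> [disjoint H :* x & H :* y]%g.
Proof.
move=> Hxy; apply/pred0P => z /=; apply/andP => -[Hz]; rewrite (rcoset_transl _ Hz).
by rewrite mem_rcoset (negPf Hxy).
Qed.

Lemma order_constt_mul p x : #[x]%g = #[x.`_p]%g * #[x.`_p^']%g.
Proof. by rewrite !order_constt partnC. Qed.

End Psi.

Section Pair.
Variables gT hT : finGroupType.

Lemma pairg1_mul_pair1g (a : gT) (c : hT) : ((a, 1) * (1, c))%g = (a, c).
Proof. by congr pair; rewrite ?mulg1 ?mul1g. Qed.

Lemma order_pairg1 (a : gT) : #[(a, 1%g : hT)]%g = #[a]%g.
Proof. exact: (order_injm (@injm_pairg1 gT hT) (in_setT a)). Qed.

Lemma order_pair1g (c : hT) : #[(1%g : gT, c)]%g = #[c]%g.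
Proof. exact: (order_injm (@injm_pair1g gT hT) (in_setT c)). Qed.

Lemma commute_pairg1_pair1g (a : gT) (c : hT) : commute (a, 1%g : hT) (1%g : gT, c).
Proof. by rewrite /commute pairg1_mul_pair1g; congr pair; rewrite ?mulg1 ?mul1g. Qed.

Lemma order_pair_coprime (a : gT) (c : hT) :
  coprime #[a]%g #[c]%g -> #[(a, c)]%g = #[a]%g * #[c]%g.
Proof.
move=> co; rewrite -pairg1_mul_pair1g orderM ?order_pairg1 ?order_pair1g //.
exact: commute_pairg1_pair1g.
Qed.

Implicit Types (H : {group gT}) (K : {group hT}) (M : {group gT * hT}).

Lemma coprime_order_cards H K a c :
  coprime #|H| #|K| -> a \in H -> c \in K -> coprime #[a]%g #[c]%g.
Proof.
by move=> coHK aH cK; rewrite (coprime_dvdl (order_dvdG aH)) ?(coprime_dvdr (order_dvdG cK)).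
Qed.

Lemma psi_setX H K : coprime #|H| #|K| -> psi (setX H K) = psi H * psi K.
Proof.
move=> coHK; rewrite /psi big_distrl /=.
under [RHS]eq_bigr do rewrite big_distrr /=.
rewrite pair_big /=; apply: eq_big => [[a c]|[a c]]; rewrite ?in_setX //=.
by case/andP=> aH cK; rewrite order_pair_coprime ?(coprime_order_cards coHK).
Qed.

Lemma mem_morphpre_pairg1 M a : (a \in (pairg1 hT @*^-1 M)%g) = ((a, 1%g) \in M).
Proof. by rewrite !inE. Qed.

Lemma mem_morphpre_pair1g M c : (c \in (@pair1g gT hT @*^-1 M)%g) = ((1%g, c) \in M).
Proof. by rewrite !inE. Qed.

Lemma setX_morphpre_pair M :
    (forall a c, (a, c) \in M -> (a, 1%g) \in M) ->
  M :=: setX (pairg1 hT @*^-1 M)%g (@pair1g gT hT @*^-1 M)%g.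
Proof.
move=> Ma1; apply/setP => -[a c]; rewrite in_setX mem_morphpre_pairg1 mem_morphpre_pair1g.
apply/idP/andP => [acM | [a1M c1M]]; last by rewrite -pairg1_mul_pair1g groupM.
have a1M := Ma1 a c acM; split=> //.
by rewrite -[(1%g, c)](mulKg (a, 1%g)) pairg1_mul_pair1g groupM ?groupV.
Qed.

Lemma coprime_setX_morphpre_pair H K M :
    coprime #|H| #|K| -> M \subset setX H K ->
  M :=: setX (pairg1 hT @*^-1 M)%g (@pair1g gT hT @*^-1 M)%g.
Proof.
move=> coHK sMHK; apply: setX_morphpre_pair => a c acM.
have := subsetP sMHK _ acM; rewrite in_setX => /andP[/= aH cK].
have sM : <[(a, 1%g) * (1%g, c)]>%g \subset M by rewrite pairg1_mul_pair1g cycle_subG.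
apply: subsetP (subset_trans (cycleMsub _ _) sM) _ (cycle_id _).
  exact: commute_pairg1_pair1g.
by rewrite order_pairg1 order_pair1g (coprime_order_cards coHK).
Qed.

Lemma subset_setX H K (G1 : {set gT}) (G2 : {set hT}) :
  (setX H K \subset setX G1 G2) = (H \subset G1) && (K \subset G2).
Proof.
apply/idP/andP => [sHK | [sH sK]]; last exact: setXS.
split; apply/subsetP; [move=> a aH | move=> c cK].
  by have := subsetP sHK (a, 1%g); rewrite !in_setX aH group1 => /(_ isT)/andP[].
by have := subsetP sHK (1%g, c); rewrite !in_setX cK group1 => /(_ isT)/andP[].
Qed.

End Pair.

Lemma dvdn_pexpS p e d : prime p -> d %| p ^ e.+1 -> (d == p ^ e.+1) || (d %| p ^ e).
Proof.
move=> pr_p /(dvdn_pfactor _ _ pr_p)[j]; rewrite leq_eqVlt => /orP[/eqP-> ->|ltj ->].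
  by rewrite eqxx.
by rewrite dvdn_exp2l ?orbT // -ltnS.
Qed.

Section PElementOrders.
Variable gT : finGroupType.
Implicit Types (a b v w : gT).

Lemma commute_constt pi a v : commute a v -> commute a.`_pi v.
Proof.
by move=> cav; have /cycleP[k ->] := cycle_constt pi a; exact/commute_sym/commuteX/commute_sym.
Qed.

Lemma order_mul_pfactor p e a b : prime p -> commute a b ->
  #[a]%g %| p ^ e -> #[b]%g = p ^ e.+1 -> #[a * b]%g = p ^ e.+1.
Proof.
move=> pr_p cab oa ob.
have ap1 : (a ^+ (p ^ e.+1) = 1)%g by apply/eqP; rewrite -order_dvdn (dvdn_trans oa) // dvdn_exp2l.
have : #[a * b]%g %| p ^ e.+1 by rewrite order_dvdn expgMn // ap1 -ob expg_order mulg1.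
case/(dvdn_pexpS pr_p)/orP => [/eqP // | oab].
have : #[b]%g %| p ^ e.
  rewrite -[b](mulKg a) order_dvdn expgMn; last exact/commute_sym/commuteV/commute_sym/commuteM.
  by rewrite expgVn (eqP (_ : a ^+ (p ^ e) == 1)%g) -?order_dvdn // invg1 mul1g -order_dvdn.
by rewrite ob dvdn_Pexp2l ?prime_gt1 // ltnn.
Qed.

Lemma order_mul_p_elt p e a v : prime p -> commute a v ->
  #[v]%g = p ^ e.+1 -> #[a.`_p]%g %| p ^ e -> #[a * v]%g = #[a.`_p^']%g * p ^ e.+1.
Proof.
move=> pr_p cav ov oap.
have pv : (p.-elt v)%g by rewrite /p_elt ov pnatX pnat_id.
rewrite (order_constt_mul p) !consttM // (constt_p_elt pv).
rewrite (constt1P (_ : (p^'^'.-elt v)%g)) ?p_eltNK // mulg1 mulnC.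
by rewrite (order_mul_pfactor pr_p (commute_constt p cav) oap ov).
Qed.

Lemma order_mul_pfactor_le p n w g : prime p -> commute w g ->
  #[g]%g = p ^ n -> #[w.`_p]%g %| p ^ n -> p ^ n * #[w.`_p^']%g <= #[w]%g + #[w * g]%g.
Proof.
move=> pr_p cwg; case: n => [|e] og owp.
  by rewrite expn0 mul1n (leq_trans _ (leq_addr _ _)) // (order_constt_mul p w) leq_pmull.
case/(dvdn_pexpS pr_p)/orP: owp => [/eqP owp | owp].
  by rewrite (order_constt_mul p w) owp leq_addr.
by rewrite (order_mul_p_elt pr_p cwg og owp) mulnC leq_addl.
Qed.
End PElementOrders.

Section CyclicOdd.
Variable gT : finGroupType.

Lemma psi_rcoset_pfactor (K : {group gT}) v p e : prime p ->
    {in K, forall k, commute k v} -> #[v]%g = p ^ e.+1 ->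
    {in K, forall k, #[k.`_p]%g %| p ^ e} ->
  p * psi K <= psi (K :* v)%g.
Proof.
move=> pr_p cKv ov oKp; rewrite psi_rcoset /psi big_distrr leq_sum // => k kK.
rewrite (order_mul_p_elt pr_p (cKv k kK) ov (oKp k kK)) (order_constt_mul p k).
rewrite /= mulnA [_ * p ^ e.+1]mulnC expnS leq_mul2r leq_mul2l.
by rewrite dvdn_leq ?expn_gt0 ?prime_gt0 ?oKp ?orbT.
Qed.

Lemma psi_cyclic_odd_proper (C K : {group gT}) :
  cyclic C -> odd #|C| -> (K \proper C)%g -> 7 * psi K <= psi C.
Proof.
move=> /cyclicP[g defC] oddC ltKC; have sKC := proper_sub ltKC.
have [|p pr_p p_iCK] := @pdivP #|C : K|%g; first by rewrite indexg_gt1 proper_subn.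
have p_gt2 : 2 < p.
  by rewrite odd_prime_gt2 // (dvdn_odd (dvdn_trans p_iCK (dvdn_indexg C K))).
have lognC : logn p #|C| = logn p #|K| + logn p #|C : K|%g.
  by rewrite -lognM ?cardG_gt0 ?indexg_gt0 // Lagrange.
have lognCK : 0 < logn p #|C : K|%g by rewrite logn_gt0 mem_primes pr_p indexg_gt0.
set e := (logn p #|C|).-1.
have oKp : {in K, forall k, #[k.`_p]%g %| p ^ e}.
  move=> k kK; rewrite order_constt (dvdn_trans (partn_dvd p (cardG_gt0 K) (order_dvdG kK))) //.
  by rewrite p_part dvdn_exp2l // /e lognC; lia.
have notK v : #[v]%g = p ^ e.+1 -> v \notin K.
  move=> ov; apply/negP => /oKp; rewrite constt_p_elt; last by rewrite /p_elt ov pnatX pnat_id.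
  by rewrite ov dvdn_Pexp2l ?prime_gt1 // ltnn.
set u := (g.`_p)%g.
have uC : u \in C by rewrite defC cycle_constt.
have ou : #[u]%g = p ^ e.+1 by rewrite order_constt orderE -defC p_part /e lognC; congr (_ ^ _); lia.
have ou2 : #[u * u]%g = p ^ e.+1.
  rewrite -{2}(expg1 u) -expgS orderXgcd ou.
  have /eqP-> : coprime (p ^ e.+1) 2 by rewrite coprimen2 -ou (dvdn_odd (order_dvdG uC)).
  exact: divn1.
have cCK v : v \in C -> {in K, forall k, commute k v}.
  move=> vC k kK; apply: (centsP (_ : abelian C)) (subsetP sKC k kK) _ vC.
  by rewrite defC cycle_abelian.
have psiKv v : v \in C -> #[v]%g = p ^ e.+1 -> 3 * psi K <= psi (K :* v)%g.
  move=> vC ov; apply: leq_trans (psi_rcoset_pfactor pr_p (cCK v vC) ov oKp).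
  by rewrite leq_mul2r p_gt2 orbT.
have d1 : [disjoint K :* 1 & K :* u]%g by rewrite disjoint_rcosets // mul1g notK ?orderV.
have d2 : [disjoint K :* 1 & K :* u^-1]%g by rewrite disjoint_rcosets // invgK mul1g notK.
have d3 : [disjoint K :* u & K :* u^-1]%g by rewrite disjoint_rcosets // invgK notK.
have sKuC : (K :* 1 :|: K :* u :|: K :* u^-1 \subset C)%g.
  by rewrite !subUset !mul_subG ?sub1set ?group1 ?groupV.
have d12 : [disjoint K :* 1 :|: K :* u & K :* u^-1]%g.
  by rewrite -setI_eq0 setIUl !disjoint_setI0 ?setU0.
apply: leq_trans (psiS sKuC); rewrite !psiU // rcoset1.
rewrite -[7]/(1 + 3 + 3) !mulnDl mul1n !leq_add ?psiKv ?groupV ?orderV //.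
Qed.

End CyclicOdd.

Lemma order_mul_conjg_dvd (gT : finGroupType) (q y : gT) :
  commute q (q ^ y)%g -> #[q * q ^ y]%g %| #[q]%g.
Proof. by move=> cq; rewrite order_dvdn expgMn // -conjXg expg_order conj1g mulg1. Qed.

Section Index2.
Variables (gT : finGroupType) (A B : {group gT}).
Hypotheses (sBA : B \subset A) (iAB : #|A : B|%g = 2).

Lemma index2_mulgg y : y \in A -> (y * y \in B)%g.
Proof.
move=> yA; have [yB | yB] := boolP (y \in B); first by rewrite groupM.
have : y \in (B :* y^-1)%g by rewrite (rcoset_index2 sBA iAB) !inE ?groupV yB.
by rewrite mem_rcoset invgK.
Qed.

Lemma index2_odd_order y : y \in A -> odd #[y]%g -> y \in B.
Proof.
move=> yA odd_y; rewrite -[y]mulg1 -(expg_order y) -expgS.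
have -> : (#[y]%g).+1 = 2 * (#[y]%g).+1./2.
  by rewrite mul2n -[in LHS](odd_double_half (#[y]%g).+1) /= odd_y.
by rewrite expgM groupX // expgS expg1 index2_mulgg.
Qed.

Lemma psi_index2 x : x \in A :\: B -> psi A = psi B + \sum_(w in B) #[w * x]%g.
Proof.
by move=> xAB; rewrite /psi (big_setID B) /= (setIidPr sBA) -(rcoset_index2 sBA iAB xAB) -psi_rcoset.
Qed.


Lemma order_mul_2elt_index2 w x : abelian B -> w \in B -> x \in A -> (2.-elt x)%g ->
  #[w * x]%g <= 2 * #|B|`_2 * #[w.`_2^']%g.
Proof.
move=> cBB wB xA x2.
have yA : (w * x \in A)%g by rewrite groupM // (subsetP sBA).
set y := (w * x)%g; set q := (w.`_2^')%g.
have cB : {in B &, forall a b, commute a b} by move=> a b aB bB; apply: (centsP cBB).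
have memB_constt pi z : z \in B -> (z.`_pi \in B)%g.
  by move=> zB; apply: subsetP (cycle_constt pi z); rewrite cycle_subG.
have nBx : (x^-1 \in 'N(B))%g by rewrite groupV (subsetP (normal_norm (index2_normal sBA iAB))).
have wxB : (w ^ x^-1 \in B)%g by rewrite memJ_norm.
have xxB : (x * x \in B)%g := index2_mulgg xA.
have yyB : (y * y \in B)%g := index2_mulgg yA.
have qB : q \in B := memB_constt _ _ wB.
have yy2' : ((y * y).`_2^' = q * q ^ x^-1)%g.
  have -> : (y * y = w * w ^ x^-1 * (x * x))%g by rewrite /y conjgE invgK !mulgA mulgKV.
  rewrite consttM; last exact: cB (groupM wB wxB) xxB.
  rewrite consttM; last exact: cB wB wxB.
  rewrite consttJ (constt1P (_ : (2^'^'.-elt (x * x))%g)) ?mulg1 //.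
  by rewrite p_eltNK p_eltM.
have oyy2 : #[(y * y).`_2]%g <= #|B|`_2.
  by rewrite dvdn_leq ?part_gt0 // order_constt partn_dvd ?order_dvdG.
have oyy2' : #[(y * y).`_2^']%g <= #[q]%g.
  rewrite yy2'; apply: dvdn_leq (order_gt0 _) (order_mul_conjg_dvd _).
  by apply: cB; rewrite ?memJ_norm.
have oy : #[y]%g <= 2 * #[y * y]%g.
  apply: dvdn_leq; first by rewrite muln_gt0 order_gt0.
  by rewrite order_dvdn expgM expgS expg1 expg_order.
by rewrite (leq_trans oy) // (order_constt_mul 2 (y * y)) -mulnA leq_mul2l leq_mul.
Qed.

Lemma psi_index2_cyclic : cyclic B -> psi A <= 5 * psi B.
Proof.
move=> /cyclicP[b0 defB].
have [y0 /setDP[y0A y0B]] : exists y0, y0 \in A :\: B.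
  by apply/set0Pn; rewrite setD_eq0 -indexg_gt1 iAB.
set x := (y0.`_2)%g; set g := (b0.`_2)%g.
have xAB : x \in A :\: B.
  have xA : x \in A by apply: subsetP (cycle_constt 2 y0); rewrite cycle_subG.
  rewrite inE xA andbT; apply: contra y0B => xB.
  rewrite -(consttC 2 y0) groupM // index2_odd_order ?order_constt ?odd_2'nat ?part_pnat //.
  by apply: subsetP (cycle_constt _ y0); rewrite cycle_subG.
have cBB : abelian B by rewrite defB cycle_abelian.
have gB : g \in B by rewrite defB cycle_constt.
have og : #[g]%g = 2 ^ logn 2 #|B| by rewrite order_constt orderE -defB p_part.
have pw w : w \in B -> #[w * x]%g <= 2 * (#[w]%g + #[w * g]%g).
  move=> wB; apply: leq_trans (order_mul_2elt_index2 cBB wB _ _) _.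
  - by case/setDP: xAB.
  - exact: p_elt_constt.
  rewrite -mulnA leq_mul2l /= p_part order_mul_pfactor_le //; first exact: (centsP cBB).
  by rewrite order_constt -p_part partn_dvd ?order_dvdG.
rewrite (psi_index2 xAB).
apply: (@leq_trans (psi B + \sum_(w in B) 2 * (#[w]%g + #[w * g]%g))).
  by rewrite leq_add2l leq_sum.
rewrite -big_distrr big_split /= -psi_rcoset rcoset_id // -/(psi B); lia.
Qed.

End Index2.

Section MaximalSetX.
Variables (gT hT : finGroupType) (A B : {group gT}) (C : {group hT}).

Lemma maximal_setX : maximal B A -> maximal (setX B C) (setX A C).
Proof.
move=> maxB; have [ltBA maxBA] := maxgroupP maxB; have sBA := proper_sub ltBA.
apply/maxgroupP; split=> [|M ltM sBCM].
  by rewrite properE !subset_setX sBA (negPf (proper_subn ltBA)) subxx.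
have sMAC := proper_sub ltM.
have MC a c : (a, c) \in M -> c \in C /\ (a, 1%g) \in M.
  move=> acM; have /setXP[_ cC] := subsetP sMAC _ acM; split=> //.
  have c'M : (1%g, c^-1)%g \in M by apply: (subsetP sBCM); rewrite in_setX group1 groupV.
  suff -> : (a, 1%g) = ((a, c) * (1%g, c^-1))%g by rewrite groupM.
  by congr pair; rewrite ?mulg1 ?mulgV.
set M1 := (pairg1 hT @*^-1 M)%G.
have sBM1 : B \subset M1.
  by apply/subsetP => b bB; rewrite mem_morphpre_pairg1 (subsetP sBCM) // in_setX bB group1.
have ltM1A : (M1 \proper A)%g.
  rewrite properE; apply/andP; split.
    by apply/subsetP => a; rewrite mem_morphpre_pairg1 => /(subsetP sMAC)/setXP[].
  apply: contra (proper_subn ltM) => sAM1; apply/subsetP => -[a c] /setXP[aA cC].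
  rewrite -pairg1_mul_pair1g groupM //; first by rewrite -mem_morphpre_pairg1 (subsetP sAM1).
  by rewrite (subsetP sBCM) // in_setX group1.
apply/eqP; rewrite eqEsubset sBCM andbT; apply/subsetP => -[a c] /MC[cC a1M].
by rewrite in_setX cC andbT -(maxBA _ ltM1A sBM1) mem_morphpre_pairg1.
Qed.

End MaximalSetX.

Section ProperSetX.
Variables (gT hT : finGroupType) (A B : {group gT}) (C : {group hT}).
Hypotheses (coAC : coprime #|A| #|C|) (cycC : cyclic C) (oddC : odd #|C|).
Hypotheses (maxB : maximal B A)
  (psiB_max : forall B' : {group gT}, maximal B' A -> psi B' <= psi B).
Hypothesis psiAB : psi A <= 7 * psi B.

Lemma psi_proper_setX (M : {group gT * hT}) :
  (M \proper setX A C)%g -> psi M <= psi (setX B C).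
Proof.
move=> ltM; have sM := proper_sub ltM.
set M1 := (pairg1 hT @*^-1 M)%G; set M2 := (@pair1g gT hT @*^-1 M)%G.
have defM : M :=: setX M1 M2 := coprime_setX_morphpre_pair coAC sM.
have /andP[sM1A sM2C] : (M1 \subset A) && (M2 \subset C) by rewrite -subset_setX -defM.
have co12 : coprime #|M1| #|M2|.
  by rewrite (coprime_dvdl (cardSg sM1A)) ?(coprime_dvdr (cardSg sM2C)).
have sBA := proper_sub (maxgroupp maxB).
rewrite defM !psi_setX ?(coprime_dvdl (cardSg sBA)) //.
have [eqM1A | [B' maxB' sM1B']] := maximal_exists sM1A.
  have ltM2C : (M2 \proper C)%g.
    rewrite properEneq sM2C andbT; apply: contraNneq (proper_subn ltM) => eqM2C.
    by rewrite defM eqM1A eqM2C.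
  rewrite eqM1A (leq_trans (leq_mul psiAB (leqnn _))) // -mulnA mulnCA leq_mul2l.
  by rewrite psi_cyclic_odd_proper ?orbT.
apply: leq_mul; last exact: psiS.
exact: leq_trans (psiS sM1B') (psiB_max maxB').
Qed.

End ProperSetX.

Theorem lemma3p14 (gT hT : finGroupType) (A B : {group gT}) (C : {group hT})
    (m : nat) :
  A :!=: 1%g -> 0 < m -> odd m -> coprime #|A| m ->
  cyclic C -> #|C| = m ->
  maximal B A ->
  (forall B' : {group gT}, maximal B' A -> psi B' <= psi B) ->
  (psi A <= 7 * psi B ->
     [/\ maximal (setX B C) (setX A C),
         (forall M : {group gT * hT}, maximal M (setX A C) -> psi M <= psi (setX B C))
       & (forall M : {group gT * hT}, (M \proper setX A C)%g -> psi M <= psi (setX B C))])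
  /\
  (cyclic B -> #|A : B|%g = 2 ->
     psi A <= 7 * psi B /\
     [/\ maximal (setX B C) (setX A C),
         (forall M : {group gT * hT}, maximal M (setX A C) -> psi M <= psi (setX B C))
       & (forall M : {group gT * hT}, (M \proper setX A C)%g -> psi M <= psi (setX B C))]).
Proof.
(* [A :!=: 1] follows from [maximal B A], and [0 < m] from [#|C| = m]. *)
move=> _ _ + + cycC oC maxB psiB_max; rewrite -oC => oddC coAC.
have part_i : psi A <= 7 * psi B -> [/\ maximal (setX B C) (setX A C),
    forall M : {group gT * hT}, maximal M (setX A C) -> psi M <= psi (setX B C)
  & forall M : {group gT * hT}, (M \proper setX A C)%g -> psi M <= psi (setX B C)].
  move=> psiAB; have psiM := psi_proper_setX coAC cycC oddC maxB psiB_max psiAB.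
  by split=> [|M /maxgroupp|]; [exact: maximal_setX | exact: psiM ..].
split=> // cycB iAB.
have psiAB : psi A <= 7 * psi B.
  exact: leq_trans (psi_index2_cyclic (proper_sub (maxgroupp maxB)) iAB cycB) (leq_mul _ _).
by split; last exact: part_i.
Qed.
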